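(* In the game $\mathrm{CN}(7,4)$, if $\mathbf p\notin S$ and $\mathbf p$ has at least two stacks of height $0$, then there is a legal move from $\mathbf p$ to some $\mathbf p'\in S_1\cup S_2\cup S_4$. Here, writing a position as $(a,b,c,d,e,f,g)$ with $a$ a minimum entry, $S_1=\{a=b=0,\ c=g>0,\ d+e+f=c\}$, $S_2=\{a=b=c=d=e=f=g\}$, $S_3=\{a=b,\ c=g,\ d=f,\ a+c=d+e,\ 0<a<e\}$, $S_4=\{a=f,\ b+c=d+e=g+a,\ a<\min\{b,e\},\ a<\max\{c,d\}\}$, and $S=S_1\cup S_2\cup S_3\cup S_4$.
   Context: Circular Nim $\mathrm{CN}(7,4)$: $7$ stacks of tokens are arranged in a circle; a position is a vector $(p_1,\dots,p_7)$ of nonnegative integers giving the stack heights in order around the circle, determined only up to rotation and reflection. A legal move consists of choosing $4$ cyclically consecutive stacks and removing at least one token from at least one of these $4$ stacks (any number from each chosen stack; other stacks unchanged). A position belongs to $S_i$ if some rotation and/or reflection $(a,b,c,d,e,f,g)$ of it with $a$ equal to the minimum entry satisfies the conditions defining $S_i$. *)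

From mathcomp Require Import all_boot.
Set Implicit Arguments. Unset Strict Implicit. Unset Printing Implicit Defensive.

(* A position: heights of the 7 stacks, indexed 0..6 in cyclic order.
   (Positions are only determined up to rotation/reflection; we work with
   a concrete representative. All notions below are invariant under the
   dihedral symmetries.) *)
Definition position := 'I_7 -> nat.

Definition hgt (p : position) (n : nat) : nat := p (inord (n %% 7)).

Definition view (p : position) (r : bool) (k : nat) (n : nat) : nat :=
  if r then hgt p (k + 7 - n) else hgt p (k + n).

Definition C1 (a b c d e f g : nat) : Prop :=
  a = 0 /\ b = 0 /\ c = g /\ 0 < c /\ d + e + f = c.
Definition C2 (a b c d e f g : nat) : Prop :=
  a = b /\ b = c /\ c = d /\ d = e /\ e = f /\ f = g.
Definition C3 (a b c d e f g : nat) : Prop :=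
  a = b /\ c = g /\ d = f /\ a + c = d + e /\ 0 < a /\ a < e.
Definition C4 (a b c d e f g : nat) : Prop :=
  a = f /\ b + c = d + e /\ d + e = g + a /\ a < minn b e /\ a < maxn c d.

Definition inSet (C : nat -> nat -> nat -> nat -> nat -> nat -> nat -> Prop)
  (p : position) : Prop :=
  exists (r : bool) (k : nat), k < 7 /\
    let q := view p r k in
    (forall i : 'I_7, q 0 <= p i) /\
    C (q 0) (q 1) (q 2) (q 3) (q 4) (q 5) (q 6).

Definition S1 := inSet C1.
Definition S2 := inSet C2.
Definition S3 := inSet C3.
Definition S4 := inSet C4.
Definition S (p : position) : Prop := S1 p \/ S2 p \/ S3 p \/ S4 p.

Definition in_window (j i : 'I_7) : bool := (i + 7 - j) %% 7 < 4.

Definition move (p p' : position) : Prop :=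
  exists j : 'I_7,
    (forall i : 'I_7, ~~ in_window j i -> p' i = p i) /\
    (forall i : 'I_7, p' i <= p i) /\
    (exists i : 'I_7, p' i < p i).

From mathcomp Require Import all_boot zify.
Set Implicit Arguments. Unset Strict Implicit. Unset Printing Implicit Defensive.

(* Moves and the sets S_i are invariant under the dihedral group of the circle,
   so we may rotate and reflect p at will.  Two empty stacks of p are at cyclic
   distance 1, 2 or 3; take the smallest such distance.
   - Distance 1: p = (0,0,c,d,e,f,g) with c <= g.  Lowering d, e, f, g (or c and g)
     until c = g = d + e + f gives a position of S1, or of S2 if everything is 0.
   - Distance 2: p = (0,b,0,d,e,f,g) with f + g <= d + e.  Making b, d + e and
     f + g all equal to min(b, f + g) gives a position of S4, or of S1 when that
     common value is 1.
   In these two cases the move can fail to be strict only if p itself is in S.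
   - Distance 3: the other five stacks are nonempty, and depending on the relative
     order of b, c, e, f, g one of five moves emptying one of them reaches S1 or S4. *)

Definition dih (r : bool) (k : nat) (i : 'I_7) : 'I_7 :=
  inord ((if r then k + 7 - i else k + i) %% 7).

Definition dihedral (r : bool) (k : nat) (p : position) : position :=
  fun i => p (dih r k i).

Lemma dihedral_view r k p (i : 'I_7) : dihedral r k p i = view p r k i.
Proof. by case: r. Qed.

Lemma hgt_eqmod p m n : m = n %[mod 7] -> hgt p m = hgt p n.
Proof. by rewrite /hgt => ->. Qed.

Lemma hgt_ord p (i : 'I_7) : hgt p i = p i.
Proof. by rewrite /hgt modn_small // inord_val. Qed.

Lemma eq_view p q : p =1 q -> forall r k n, view p r k n = view q r k n.
Proof. by move=> pq r k n; rewrite /view /hgt; case: r. Qed.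

Lemma view_dihedral r k r1 k1 :
  exists r2 k2, k2 < 7 /\
    forall p n, n < 7 -> view (dihedral r k p) r2 k2 n = view p r1 k1 n.
Proof.
exists (r (+) r1), (if r then (k + 7 - k1 %% 7) %% 7 else (k1 + 7 - k %% 7) %% 7).
split; first by case: r; rewrite ltn_pmod.
move=> p n n7; rewrite /view /hgt /dihedral /dih.
by case: r; case: r1 => /=; rewrite inordK ?ltn_pmod //; congr (p (inord _)); lia.
Qed.

Lemma dihedral_inv r k :
  exists r' k', forall p q, q =1 dihedral r k p -> p =1 dihedral r' k' q.
Proof.
have [r' [k' [_ vk]]] := view_dihedral r k false 0.
exists r', k' => p q qp i.
by rewrite dihedral_view (eq_view qp) vk // -hgt_ord.
Qed.

Lemma inSet_dihedral C r k p q :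
  q =1 dihedral r k p -> inSet C p -> inSet C q.
Proof.
move=> qp [r1 [k1 [_ [min1 C1p]]]].
have [r2 [k2 [k27 vk]]] := view_dihedral r k r1 k1.
have vq n : n < 7 -> view q r2 k2 n = view p r1 k1 n.
  by move=> n7; rewrite (eq_view qp) vk.
exists r2, k2; split=> //=; rewrite !vq //; split=> // i.
by rewrite qp; apply: min1.
Qed.

(* The reflection i |-> k - i maps the window j..j+3 onto k-j-3..k-j. *)
Lemma in_window_dih r k j :
  exists j', forall i, in_window j (dih r k i) -> in_window j' i.
Proof.
exists (inord (if r then (k + 11 - j) %% 7 else (j + 7 - k %% 7) %% 7)) => i.
rewrite /in_window /dih.
by have := ltn_ord i; have := ltn_ord j; case: r; rewrite !inordK ?ltn_pmod //; lia.
Qed.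

Lemma move_dihedral r k p p' q q' :
  q =1 dihedral r k p -> q' =1 dihedral r k p' -> move p p' -> move q q'.
Proof.
move=> qp qp' [j [out_j [le_p' [i lt_i]]]].
have [j' wj] := in_window_dih r k j.
have [r' [k' inv]] := dihedral_inv r k.
exists j'; split; [|split].
- by move=> i0 out0; rewrite qp qp' /dihedral out_j //; apply: contra (wj i0) out0.
- by move=> i0; rewrite qp qp'; apply: le_p'.
- by exists (dih r' k' i); move: lt_i; rewrite (inv _ _ qp) (inv _ _ qp').
Qed.

Definition reaches_S124 (p : position) : Prop :=
  exists p', move p p' /\ (S1 p' \/ S2 p' \/ S4 p').

Lemma reaches_dihedral r k p q :
  q =1 dihedral r k p -> reaches_S124 q -> reaches_S124 p.
Proof.
move=> qp [q' [mv_q' S_q']].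
have [r' [k' inv]] := dihedral_inv r k.
have pq := inv _ _ qp.
exists (dihedral r' k' q'); split; first exact: move_dihedral pq (frefl _) mv_q'.
have transport C : inSet C q' -> inSet C (dihedral r' k' q') := inSet_dihedral (frefl _).
by case: S_q' => [/transport|[/transport|/transport]]; auto.
Qed.

Lemma notS_dihedral r k p q : q =1 dihedral r k p -> ~ S p -> ~ S q.
Proof.
move=> qp notS Sq; apply: notS.
have [r' [k' inv]] := dihedral_inv r k.
have transport C : inSet C q -> inSet C p := inSet_dihedral (inv _ _ qp).
by case: Sq => [/transport|[/transport|[/transport|/transport]]]; rewrite /S; auto.
Qed.

Definition stacks (x0 x1 x2 x3 x4 x5 x6 : nat) : position :=
  fun i => nth 0 [:: x0; x1; x2; x3; x4; x5; x6] i.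

Lemma view_stacks x0 x1 x2 x3 x4 x5 x6 r k n :
  view (stacks x0 x1 x2 x3 x4 x5 x6) r k n =
  nth 0 [:: x0; x1; x2; x3; x4; x5; x6] ((if r then k + 7 - n else k + n) %% 7).
Proof. by rewrite /view /hgt /stacks; case: r; rewrite inordK // ltn_pmod. Qed.

Lemma stacks_lt x0 x1 x2 x3 x4 x5 x6 y0 y1 y2 y3 y4 y5 y6 :
  y0 <= x0 -> y1 <= x1 -> y2 <= x2 -> y3 <= x3 -> y4 <= x4 -> y5 <= x5 -> y6 <= x6 ->
  y0 + y1 + y2 + y3 + y4 + y5 + y6 < x0 + x1 + x2 + x3 + x4 + x5 + x6 ->
  exists i : 'I_7, stacks y0 y1 y2 y3 y4 y5 y6 i < stacks x0 x1 x2 x3 x4 x5 x6 i.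
Proof.
move=> *.
have : y0 < x0 \/ y1 < x1 \/ y2 < x2 \/ y3 < x3 \/ y4 < x4 \/ y5 < x5 \/ y6 < x6 by lia.
by case=> [|[|[|[|[|[|]]]]]] lt;
  [ exists (inord 0) | exists (inord 1) | exists (inord 2) | exists (inord 3)
  | exists (inord 4) | exists (inord 5) | exists (inord 6) ]; rewrite /stacks inordK.
Qed.

Ltac case_ord7 := case=> [[|[|[|[|[|[|[|?]]]]]]] ?] //.

Ltac solve_inSet r k :=
  exists r, k; split; first by [];
  cbv zeta; rewrite !view_stacks /=; split; [case_ord7; rewrite /stacks /=; lia | hnf; lia].

Ltac solve_move j :=
  exists (inord j); split; [|split];
  [ case_ord7; rewrite /in_window /stacks inordK //=; lia
  | case_ord7; rewrite /stacks /=; lia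
  | apply: stacks_lt; lia ].

Lemma sum_target_S12 m x y z :
  x + y + z = m -> S1 (stacks 0 0 m x y z m) \/ S2 (stacks 0 0 m x y z m).
Proof.
move=> sum_m; case: (posnP m) => [m0|m_gt0].
  by right; solve_inSet false 0.
by left; solve_inSet false 0.
Qed.

Lemma balanced_target_S14 s x y z w :
  0 < x -> 0 < w -> x + y = s -> z + w = s -> s = 1 \/ 0 < y + z ->
  S1 (stacks 0 s 0 x y z w) \/ S4 (stacks 0 s 0 x y z w).
Proof.
move=> x_gt0 w_gt0 xy zw [s1|yz_gt0].
  by left; solve_inSet false 4.
by right; solve_inSet false 2.
Qed.

Lemma reaches_stacks_gap1 c d e f g :
  ~ S (stacks 0 0 c d e f g) -> reaches_S124 (stacks 0 0 c d e f g).
Proof.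
wlog c_le_g : c d e f g / c <= g.
  move=> gen; case: (leqP c g); first exact: gen.
  move=> /ltnW g_le_c notS.
  have refl : stacks 0 0 g f e d c =1 dihedral true 1 (stacks 0 0 c d e f g).
    by case_ord7; rewrite dihedral_view view_stacks.
  by apply: (reaches_dihedral refl); apply: gen => //; apply: (notS_dihedral refl).
move=> notS; set s := d + e + f.
case: (ltnP s c) => [s_lt_c|c_le_s].
  exists (stacks 0 0 s d e f s); split; first by solve_move 6.
  by have := sum_target_S12 (erefl s); tauto.
set D := minn d c; set E := minn e (c - D); set F := c - D - E.
have sum_c : D + E + F = c by lia.
have [lt|[s_c g_c]] : D + E + F + c < s + g \/ s = c /\ g = c by lia.
  exists (stacks 0 0 c D E F c); split; first by solve_move 3.
  by have := sum_target_S12 sum_c; tauto.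
by case: notS; have := sum_target_S12 s_c; rewrite g_c /S; tauto.
Qed.

Lemma reaches_stacks_gap2 b d e f g :
  0 < b -> 0 < d -> 0 < g -> 0 < e + f ->
  ~ S (stacks 0 b 0 d e f g) -> reaches_S124 (stacks 0 b 0 d e f g).
Proof.
wlog fg_le_de : d e f g / f + g <= d + e.
  move=> gen b_gt0 d_gt0 g_gt0 ef_gt0 notS.
  case: (leqP (f + g) (d + e)) => [?|de_lt_fg]; first exact: gen.
  have refl : stacks 0 b 0 g f e d =1 dihedral true 2 (stacks 0 b 0 d e f g).
    by case_ord7; rewrite dihedral_view view_stacks.
  apply: (reaches_dihedral refl); apply: (gen g f e d) => //; try lia.
  exact: (notS_dihedral refl).
move=> b_gt0 d_gt0 g_gt0 ef_gt0 notS.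
case: (leqP b (f + g)) => [b_le_fg|fg_lt_b].
  (* Capping at b - 1 keeps the new stacks b - E and b - F nonempty. *)
  set E := minn e (b - 1); set F := minn f (b - 1).
  have [lt|[de_b fg_b]] :
      b - E + E + F + (b - F) < d + e + f + g \/ d + e = b /\ f + g = b by lia.
    exists (stacks 0 b 0 (b - E) E F (b - F)); split; first by solve_move 3.
    have : S1 (stacks 0 b 0 (b - E) E F (b - F)) \/ S4 (stacks 0 b 0 (b - E) E F (b - F)).
      by apply: balanced_target_S14; lia.
    tauto.
  case: notS; have := balanced_target_S14 d_gt0 g_gt0 de_b fg_b (or_intror ef_gt0).
  by rewrite /S; tauto.
set D := maxn 1 (f + g - e); set E := f + g - D.
exists (stacks 0 (f + g) 0 D E f g); split; first by solve_move 1.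
have : S1 (stacks 0 (f + g) 0 D E f g) \/ S4 (stacks 0 (f + g) 0 D E f g).
  by apply: balanced_target_S14; lia.
tauto.
Qed.

Lemma split_target_S1 s x y : 0 < s -> x + y = s -> S1 (stacks 0 x s 0 0 s y).
Proof. by move=> *; solve_inSet false 3. Qed.

Lemma split_target_S4 s x y : 0 < x -> 0 < y -> x + y = s -> S4 (stacks 0 x y 0 s 0 s).
Proof. by move=> *; solve_inSet false 5. Qed.

Lemma reaches_reflect3 b c e f g :
  reaches_S124 (stacks 0 c b 0 g f e) -> reaches_S124 (stacks 0 b c 0 e f g).
Proof.
apply: (reaches_dihedral (r := true) (k := 3)).
by case_ord7; rewrite dihedral_view view_stacks.
Qed.

Lemma reaches_empty_b b c e f g :
  0 < b -> e <= c <= g \/ f <= g <= c -> reaches_S124 (stacks 0 b c 0 e f g).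
Proof.
move=> b_gt0 order.
case: (ltnP (e + f) (minn c g)) => [ef_lt|min_le_ef].
  exists (stacks 0 0 (e + f) 0 e f (e + f)); split; first by solve_move 6.
  have : 0 + e + f = e + f by [].
  by move/sum_target_S12; tauto.
case: order => /andP[le1 le2].
  exists (stacks 0 0 c 0 e (c - e) c); split; first by solve_move 5.
  have : 0 + e + (c - e) = c by lia.
  by move/sum_target_S12; tauto.
exists (stacks 0 0 g 0 (g - f) f g); split; first by solve_move 1.
have : 0 + (g - f) + f = g by lia.
by move/sum_target_S12; tauto.
Qed.

Lemma reaches_empty_c b c e f g :
  0 < c -> g <= b <= e \/ f <= e <= b -> reaches_S124 (stacks 0 b c 0 e f g).
Proof. by move=> c_gt0 order; apply: reaches_reflect3; apply: reaches_empty_b. Qed.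

Lemma reaches_empty_e b c e f g : 0 < b -> 0 < e -> 0 < g ->
  b <= c <= f \/ g <= f <= c -> reaches_S124 (stacks 0 b c 0 e f g).
Proof.
move=> b_gt0 e_gt0 g_gt0 order.
case: (ltnP (b + g) (minn c f)) => [bg_lt|min_le_bg].
  exists (stacks 0 b (b + g) 0 0 (b + g) g); split; first by solve_move 2.
  by left; apply: split_target_S1; lia.
case: order => /andP[le1 le2].
  exists (stacks 0 b c 0 0 c (c - b)); split; first by solve_move 4.
  by left; apply: split_target_S1; lia.
exists (stacks 0 (f - g) f 0 0 f g); split; first by solve_move 1.
by left; apply: split_target_S1; lia.
Qed.

Lemma reaches_empty_g b c e f g : 0 < c -> 0 < e -> 0 < g ->
  c <= b <= f \/ e <= f <= b -> reaches_S124 (stacks 0 b c 0 e f g).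
Proof. by move=> *; apply: reaches_reflect3; apply: reaches_empty_e. Qed.

Lemma reaches_empty_f b c e f g : 0 < b -> 0 < c -> 0 < f ->
  b < g <= e \/ c < e <= g -> reaches_S124 (stacks 0 b c 0 e f g).
Proof.
move=> b_gt0 c_gt0 f_gt0 order.
case: (ltnP (b + c) (minn e g)) => [bc_lt|min_le_bc].
  exists (stacks 0 b c 0 (b + c) 0 (b + c)); split; first by solve_move 3.
  by right; right; apply: split_target_S4.
case: order => /andP[lt1 le2].
  exists (stacks 0 b (g - b) 0 g 0 g); split; first by solve_move 2.
  by right; right; apply: split_target_S4; lia.
exists (stacks 0 (e - c) c 0 e 0 e); split; first by solve_move 5.
by right; right; apply: split_target_S4; lia.
Qed.

Lemma reaches_stacks_gap3 b c e f g : 0 < b -> 0 < c -> 0 < e -> 0 < f -> 0 < g ->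
  reaches_S124 (stacks 0 b c 0 e f g).
Proof.
move=> b_gt0 c_gt0 e_gt0 f_gt0 g_gt0.
have : (e <= c <= g \/ f <= g <= c) \/ (g <= b <= e \/ f <= e <= b) \/
       (b <= c <= f \/ g <= f <= c) \/ (c <= b <= f \/ e <= f <= b) \/
       (b < g <= e \/ c < e <= g) by lia.
case=> [|[|[|[|]]]] order.
- exact: reaches_empty_b.
- exact: reaches_empty_c.
- exact: reaches_empty_e.
- exact: reaches_empty_g.
- exact: reaches_empty_f.
Qed.

Definition zero_gap (p : position) (d : nat) : bool :=
  [exists k : 'I_7, (hgt p k == 0) && (hgt p (k + d) == 0)].

Lemma zero_gap_witness p d m n :
  hgt p m = 0 -> hgt p n = 0 -> n = m + d %[mod 7] -> zero_gap p d.
Proof.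
move=> hm hn mn; apply/existsP; exists (inord (m %% 7)); rewrite inordK ?ltn_pmod //.
have -> : hgt p (m %% 7) = 0 by rewrite -hm; apply: hgt_eqmod; lia.
by have -> : hgt p (m %% 7 + d) = 0 by rewrite -hn; apply: hgt_eqmod; lia.
Qed.

Lemma nonempty_at_gap p d m n : ~~ zero_gap p d -> hgt p m = 0 ->
  n = m + d %[mod 7] \/ m = n + d %[mod 7] -> 0 < hgt p n.
Proof.
move=> nogap hm mn; rewrite lt0n; apply/eqP => hn; case/negP: nogap.
by case: mn; [apply: zero_gap_witness hm hn | apply: zero_gap_witness hn hm].
Qed.

Lemma zero_gap_le3 p (i j : 'I_7) : i != j -> p i = 0 -> p j = 0 ->
  [|| zero_gap p 1, zero_gap p 2 | zero_gap p 3].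
Proof.
have := ltn_ord i; have := ltn_ord j.
wlog lt4 : i j / (j + 7 - i) %% 7 < 4.
  move=> gen j7 i7 neq pi0 pj0; case: (ltnP ((j + 7 - i) %% 7) 4) => [lt|ge].
    exact: (gen i j).
  by apply: (gen j i) => //; [lia | rewrite eq_sym].
move=> j7 i7 neq pi0 pj0.
have neq' : (i : nat) != j by [].
have [d d123 gap] : exists2 d, [|| d == 1, d == 2 | d == 3] & zero_gap p d.
  exists ((j + 7 - i) %% 7); first lia.
  by apply: (@zero_gap_witness _ _ i j); rewrite ?hgt_ord //; lia.
by case/or3P: d123 gap => /eqP-> ->; rewrite ?orbT.
Qed.

Definition rotate (k : nat) (p : position) : position :=
  stacks (hgt p k) (hgt p (k + 1)) (hgt p (k + 2)) (hgt p (k + 3))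
     (hgt p (k + 4)) (hgt p (k + 5)) (hgt p (k + 6)).

Lemma rotateE k p : rotate k p =1 dihedral false k p.
Proof. by case_ord7; rewrite dihedral_view /view ?addn0. Qed.

Lemma reaches_gap1 p k :
  ~ S p -> hgt p k = 0 -> hgt p (k + 1) = 0 -> reaches_S124 p.
Proof.
move=> notS h0 h1; apply: (reaches_dihedral (rotateE k p)).
move: (notS_dihedral (rotateE k p) notS); rewrite /rotate h0 h1.
exact: reaches_stacks_gap1.
Qed.

Lemma reaches_gap2 p k : ~ S p -> ~~ zero_gap p 1 ->
  hgt p k = 0 -> hgt p (k + 2) = 0 -> reaches_S124 p.
Proof.
move=> notS gap1 h0 h2; have pos := nonempty_at_gap gap1.
apply: (reaches_dihedral (rotateE k p)).
move: (notS_dihedral (rotateE k p) notS); rewrite /rotate h0 h2.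
apply: reaches_stacks_gap2.
- by apply: (pos _ _ h0); lia.
- by apply: (pos _ _ h2); lia.
- by apply: (pos _ _ h0); lia.
- have [h4|] := posnP (hgt p (k + 4)); last lia.
  have : 0 < hgt p (k + 5) by apply: (pos _ _ h4); lia.
  lia.
Qed.

Lemma reaches_gap3 p k : ~~ zero_gap p 1 -> ~~ zero_gap p 2 ->
  hgt p k = 0 -> hgt p (k + 3) = 0 -> reaches_S124 p.
Proof.
move=> gap1 gap2 h0 h3.
have pos1 := nonempty_at_gap gap1; have pos2 := nonempty_at_gap gap2.
apply: (reaches_dihedral (rotateE k p)); rewrite /rotate h0 h3.
apply: reaches_stacks_gap3.
- by apply: (pos1 _ _ h0); lia.
- by apply: (pos1 _ _ h3); lia.
- by apply: (pos1 _ _ h3); lia.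
- by apply: (pos2 _ _ h3); lia.
- by apply: (pos1 _ _ h0); lia.
Qed.

Theorem lemma2 (p : position) :
  ~ S p ->
  (exists i j : 'I_7, i != j /\ p i = 0 /\ p j = 0) ->
  exists p' : position, move p p' /\ (S1 p' \/ S2 p' \/ S4 p').
Proof.
move=> notS [i [j [neq_ij [pi0 pj0]]]].
have [/existsP[k /andP[/eqP h0 /eqP h1]]|gap1] := boolP (zero_gap p 1).
  exact: reaches_gap1 notS h0 h1.
have [/existsP[k /andP[/eqP h0 /eqP h2]]|gap2] := boolP (zero_gap p 2).
  exact: reaches_gap2 notS gap1 h0 h2.
have /existsP[k /andP[/eqP h0 /eqP h3]] : zero_gap p 3.
  by move: (zero_gap_le3 neq_ij pi0 pj0); rewrite (negbTE gap1) (negbTE gap2).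
exact: reaches_gap3 gap1 gap2 h0 h3.
Qed.
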